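(* For all $0\le t<1$, $$\lim_{x\downarrow C^*\sqrt{1-t}}\frac{\partial}{\partial x}V^*(t,x)=\lim_{x\uparrow C^*\sqrt{1-t}}\frac{\partial}{\partial x}f(t,x),$$ where $$V^*(t,x)=\begin{cases}\sqrt{1-t}\,\sqrt{2\pi}\,\Phi(-x/\sqrt{1-t})e^{x^2/(2(1-t))}v(C^* ), & x>C^*\sqrt{1-t},\\ f(t,x), & x\le C^*\sqrt{1-t}.\end{cases}$$
   Context: $\Phi$ is the standard normal distribution function. $B^*\approx0.84$ is the unique positive solution of $\sqrt{2\pi}(1-B^2)e^{B^2/2}\Phi(B)=B$. Define $U(t,x)=\sqrt{2\pi(1-t)}(1-(B^* )^2)e^{x^2/(2(1-t))}\Phi(x/\sqrt{1-t})$ for $x<B^*\sqrt{1-t}$, and $U(t,x)=x$ otherwise. Set $f(t,x)=U(t,x)-x$. For $C\le B^*$ let $v(C)=\frac{1}{\Phi(-C)}[(1-(B^* )^2)\Phi(C)-Ce^{-C^2/2}/\sqrt{2\pi}]$ and $u(C)=1-(B^* )^2-(1-C^2)\Phi(-C)-\frac{C}{\sqrt{2\pi}}e^{-C^2/2}$. $C^*$ is the unique negative zero of $u$. *)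

From HB Require Import structures.
From mathcomp Require Import all_boot all_order all_algebra.
From mathcomp Require Import all_classical all_reals all_analysis.
Set Implicit Arguments. Unset Strict Implicit. Unset Printing Implicit Defensive.
Import Order.TTheory GRing.Theory Num.Theory.
Import numFieldNormedType.Exports.
Local Open Scope classical_set_scope.
Local Open Scope ring_scope.

Section defs.
Variable R : realType.

Definition phi (x : R) : R := expR (- (x ^+ 2) / 2) / Num.sqrt (2 * pi).

Definition Phi (x : R) : R :=
  \int[@lebesgue_measure R]_(s in `]-oo, x]) phi s.

Definition Bstar_eq (B : R) : Prop :=
  Num.sqrt (2 * pi) * (1 - B ^+ 2) * expR (B ^+ 2 / 2) * Phi B = B.

Definition U (B t x : R) : R :=
  if x < B * Num.sqrt (1 - t) then
    Num.sqrt (2 * pi * (1 - t)) * (1 - B ^+ 2)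
      * expR (x ^+ 2 / (2 * (1 - t))) * Phi (x / Num.sqrt (1 - t))
  else x.

Definition f (B t x : R) : R := U B t x - x.

Definition v (B C : R) : R :=
  ((1 - B ^+ 2) * Phi C - C * expR (- (C ^+ 2) / 2) / Num.sqrt (2 * pi))
    / Phi (- C).

Definition u (B C : R) : R :=
  1 - B ^+ 2 - (1 - C ^+ 2) * Phi (- C)
    - C / Num.sqrt (2 * pi) * expR (- (C ^+ 2) / 2).

(* V^*(t,x), with B^* and C^* as parameters B and C *)
Definition Vstar (B C t x : R) : R :=
  if C * Num.sqrt (1 - t) < x then
    Num.sqrt (1 - t) * Num.sqrt (2 * pi) * Phi (- x / Num.sqrt (1 - t))
      * expR (x ^+ 2 / (2 * (1 - t))) * v B C
  else f B t x.

End defs.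

(* After the change of variables z = x / sqrt(1 - t), both branches become
   sqrt(1 - t) times a function of z built from
   psi z = sqrt(2 pi) exp(z^2/2) Phi(z), which satisfies psi' = z psi + 1:
   for x < B sqrt(1 - t), f = sqrt(1 - t) (1 - B^2) psi(z) - x, and for
   x > C sqrt(1 - t), V* = sqrt(1 - t) v(C) psi(-z).  Each branch is C^1, so
   the one-sided limits of the derivative at C sqrt(1 - t) are the derivatives
   of the branches there, namely (1 - B^2) psi'(C) - 1 and -v(C) psi'(-C).
   Their equality is an algebraic consequence of u(C) = 0 and
   Phi(C) + Phi(-C) = 1. *)

From mathcomp Require Import all_boot all_order all_algebra.
From mathcomp Require Import all_classical all_reals all_analysis.
From mathcomp Require Import ring lra.
Import Order.TTheory GRing.Theory Num.Theory.
Import numFieldNormedType.Exports.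
Set Implicit Arguments. Unset Strict Implicit. Unset Printing Implicit Defensive.
Local Open Scope classical_set_scope.
Local Open Scope ring_scope.

Section standard_normal.
Variable R : realType.
Local Notation mu := (@lebesgue_measure R).
Implicit Types x : R.

Lemma phiE : @phi R = normal_pdf 0 1.
Proof.
apply/funext => x; rewrite /phi /normal_pdf oner_eq0 /normal_peak /normal_fun.
by rewrite expr1n mul1r subr0 mulrC mulr_natl.
Qed.

Lemma phiN x : phi (- x) = phi x.
Proof. by rewrite /phi sqrrN. Qed.

Lemma phi_ge0 x : 0 <= phi x.
Proof. by rewrite phiE normal_pdf_ge0. Qed.

Lemma continuous_phi : continuous (@phi R).
Proof. by rewrite phiE; apply: continuous_normal_pdf; rewrite oner_eq0. Qed.

Lemma integrable_phi : mu.-integrable [set: R] (EFin \o @phi R).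
Proof. by rewrite phiE; exact: integrable_normal_pdf. Qed.

Lemma integrable_phi_itv (i : interval R) : mu.-integrable [set` i] (EFin \o @phi R).
Proof. exact: integrableS integrable_phi. Qed.

Lemma Phi_total : \int[mu]_x (@phi R x) = 1.
Proof. by rewrite /Rintegral phiE integral_normal_pdf. Qed.

Global Instance is_derive_Phi x : is_derive x 1 (@Phi R) (phi x).
Proof.
have [dPhi dPhiE] := @continuous_FTC1 R (@phi R) -oo%O x (x + 1)
  (ltr_pwDr ltr01 (lexx x)) (integrable_phi_itv _) (ltNyr _) (@continuous_phi x).
by apply: DeriveDef; rewrite -?derive1E.
Qed.

Lemma PhiN x : Phi (- x) = 1 - Phi x.
Proof.
have := @Rintegral_itvB R (@phi R) -oo%O +oo%O x.
rewrite set_itvNyy => /(_ integrable_phi isT isT).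
rewrite Phi_total Rintegral_itv_obnd_cbnd ?integrable_phi_itv // => ->.
rewrite /Phi /Rintegral ge0_integration_by_substitutionNy //.
- by congr fine; apply: eq_integral => y _; rewrite /= phiN.
- exact/continuous_subspaceT/continuous_phi.
- by move=> y _; exact: phi_ge0.
Qed.

Lemma Phi_gt0 x : 0 <= x -> 0 < Phi x.
Proof.
move=> x_ge0.
have Phi0 : Phi (0 : R) = 2^-1 by have := PhiN 0; rewrite oppr0; lra.
have := @Rintegral_itvB R (@phi R) -oo%O (BRight x) 0 (integrable_phi_itv _) isT.
rewrite bnd_simp => /(_ x_ge0) Phi_incr.
have : 0 <= Phi x - Phi 0.
  by rewrite /Phi Phi_incr; apply: Rintegral_ge0 => z _; exact: phi_ge0.
by rewrite Phi0; lra.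
Qed.
End standard_normal.

Section psi.
Variable R : realType.
Implicit Types z : R.
Local Notation sqrt2pi := (Num.sqrt (2 * pi) : R).

(* psi z = Phi z / phi z *)
Definition psi z := sqrt2pi * expR (z ^+ 2 / 2) * Phi z.

Definition dpsi z := z * psi z + 1.

Lemma sqrt2pi_gt0 : 0 < sqrt2pi.
Proof. by rewrite sqrtr_gt0 mulr_gt0 ?pi_gt0. Qed.

Lemma sqrt2pi_expR_phi z : sqrt2pi * expR (z ^+ 2 / 2) * phi z = 1.
Proof.
rewrite /phi mulNr expRN; field.
by rewrite !gt_eqF ?expR_gt0 ?sqrt2pi_gt0.
Qed.

Global Instance is_derive_psi z : is_derive z 1 psi (dpsi z).
Proof.
apply: is_derive_eq; rewrite /dpsi -[in RHS](sqrt2pi_expR_phi z) /psi.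
by rewrite /GRing.scale /=; field.
Qed.

Global Instance is_derive_dpsi z : is_derive z 1 dpsi (psi z + z * dpsi z).
Proof. by apply: is_derive_eq; rewrite /dpsi /GRing.scale /=; ring. Qed.
End psi.

Section one_sided_derivatives.
Variable R : realType.
Implicit Types (g h dg : R -> R) (c x y : R).

Lemma is_derive_continuous h x (dh : R) : is_derive x 1 h dh -> {for x, continuous h}.
Proof. by case=> /derivable1_diffP/differentiable_continuous. Qed.

Lemma derive1_at_right h g dg c : (forall y, c < y -> h y = g y) ->
  (forall y, is_derive y 1 g (dg y)) -> {for c, continuous dg} ->
  (\forall x \near c^'+, derivable h x 1) /\ derive1 h x @[x --> c^'+] --> dg c.
Proof.
move=> hg gdg dg_cont.
have hdh y : c < y -> is_derive y 1 h (dg y).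
  move=> cy; apply: near_eq_is_derive (gdg y); near=> z.
  by rewrite hg //; near: z; exact: lt_nbhsr.
have near_c : \forall y \near c^'+, is_derive (y : R) 1 h (dg y).
  exact: filterS hdh (nbhs_right_gt c).
split; first by apply: filterS near_c => y [].
apply: cvg_trans (cvg_at_right_filter dg_cont); apply: near_eq_cvg.
by apply: filterS near_c => y [_ dh]; rewrite derive1E dh.
Unshelve. all: by end_near. Qed.

Lemma derive1_at_left h g dg c : (forall y, y < c -> h y = g y) ->
  (forall y, is_derive y 1 g (dg y)) -> {for c, continuous dg} ->
  (\forall x \near c^'-, derivable h x 1) /\ derive1 h x @[x --> c^'-] --> dg c.
Proof.
move=> hg gdg dg_cont.
have hdh y : y < c -> is_derive y 1 h (dg y).
  move=> yc; apply: near_eq_is_derive (gdg y); near=> z.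
  by rewrite hg //; near: z; exact: lt_nbhsl.
have near_c : \forall y \near c^'-, is_derive (y : R) 1 h (dg y).
  exact: filterS hdh (nbhs_left_lt c).
split; first by apply: filterS near_c => y [].
apply: cvg_trans (cvg_at_left_filter dg_cont); apply: near_eq_cvg.
by apply: filterS near_c => y [_ dh]; rewrite derive1E dh.
Unshelve. all: by end_near. Qed.
End one_sided_derivatives.

Section value_functions.
Variables (R : realType) (B C t : R).
Hypothesis t_lt1 : t < 1.
Local Notation s := (Num.sqrt (1 - t)).

Lemma sqrt1B_gt0 : 0 < s.
Proof. by rewrite sqrtr_gt0 subr_gt0. Qed.

Lemma sqr_div_sqrt1B x : (x / s) ^+ 2 = x ^+ 2 / (1 - t).
Proof. by rewrite expr_div_n sqr_sqrtr // subr_ge0 ltW. Qed.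

Lemma U_dilate x : x < B * s -> U B t x = s * ((1 - B ^+ 2) * psi (x / s)).
Proof.
move=> xB; rewrite /U xB /psi sqr_div_sqrt1B sqrtrM ?mulr_ge0 ?pi_ge0 // invfM.
by rewrite [_ / (1 - t) / 2]mulrAC -[_ / 2 / _]mulrA; ring.
Qed.

Lemma Vstar_dilate x : C * s < x -> Vstar B C t x = s * (v B C * psi (- (x / s))).
Proof.
move=> Cx; rewrite /Vstar Cx /psi sqrrN sqr_div_sqrt1B mulNr invfM.
by rewrite [_ / (1 - t) / 2]mulrAC -[_ / 2 / _]mulrA; ring.
Qed.

Lemma Vstar_right_derivative :
  (\forall x \near (C * s)^'+, derivable (Vstar B C t) x 1) /\
  derive1 (Vstar B C t) x @[x --> (C * s)^'+] --> - v B C * dpsi (- C).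
Proof.
have s_neq0 : s != 0 by rewrite gt_eqF ?sqrt1B_gt0.
have := @derive1_at_right _ (Vstar B C t) (fun y => s * (v B C * psi (- (y / s))))
  (fun y => - v B C * dpsi (- (y / s))) (C * s) Vstar_dilate.
rewrite mulfK //; apply.
- by move=> y; apply: is_derive_eq; rewrite /GRing.scale /=; field.
- exact: is_derive_continuous.
Qed.

Lemma f_left_derivative : C <= B ->
  (\forall x \near (C * s)^'-, derivable (f B t) x 1) /\
  derive1 (f B t) x @[x --> (C * s)^'-] --> (1 - B ^+ 2) * dpsi C - 1.
Proof.
move=> CB; have s_neq0 : s != 0 by rewrite gt_eqF ?sqrt1B_gt0.
have f_dilate y : y < C * s -> f B t y = s * ((1 - B ^+ 2) * psi (y / s)) - y.
  move=> yC; rewrite /f U_dilate //; apply: lt_le_trans yC _.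
  by rewrite ler_pM2r ?sqrt1B_gt0.
have := @derive1_at_left _ (f B t) _ (fun y => (1 - B ^+ 2) * dpsi (y / s) - 1)
  (C * s) f_dilate.
rewrite mulfK //; apply.
- by move=> y; apply: is_derive_eq; rewrite /GRing.scale /=; field.
- exact: is_derive_continuous.
Qed.
End value_functions.

Lemma smooth_fit (R : realType) (B C : R) : C <= 0 -> u B C = 0 ->
  - v B C * dpsi (- C) = (1 - B ^+ 2) * dpsi C - 1.
Proof.
move=> C_le0 uC0.
have r_neq0 : Num.sqrt (2 * pi) != 0 :> R by rewrite gt_eqF ?sqrt2pi_gt0.
have E_neq0 : expR (C ^+ 2 / 2) != 0 by rewrite gt_eqF ?expR_gt0.
have P_neq0 : Phi (- C) != 0 by rewrite gt_eqF ?Phi_gt0 ?oppr_ge0.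
have PhiC : Phi C = 1 - Phi (- C) by rewrite -PhiN opprK.
have expRN2 : expR (- (C ^+ 2) / 2) = (expR (C ^+ 2 / 2))^-1 by rewrite mulNr expRN.
have B2 : 1 - B ^+ 2 =
    (1 - C ^+ 2) * Phi (- C) + C / Num.sqrt (2 * pi) / expR (C ^+ 2 / 2).
  by move: uC0; rewrite /u expRN2; lra.
rewrite /dpsi /v /psi sqrrN PhiC expRN2 B2.
by field; rewrite P_neq0 r_neq0 E_neq0.
Qed.

Theorem lemma3p3 (R : realType) (B C : R)
  (hB : 0 < B) (hBeq : Bstar_eq B)
  (hBuniq : forall B' : R, 0 < B' -> Bstar_eq B' -> B' = B)
  (hC : C < 0) (hCeq : u B C = 0)
  (hCuniq : forall C' : R, C' < 0 -> u B C' = 0 -> C' = C)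
  (t : R) (ht0 : 0 <= t) (ht1 : t < 1) :
  exists L : R,
    (\forall x \near (C * Num.sqrt (1 - t))^'+, derivable (Vstar B C t) x 1) /\
    (\forall x \near (C * Num.sqrt (1 - t))^'-, derivable (f B t) x 1) /\
    (derive1 (Vstar B C t) x @[x --> (C * Num.sqrt (1 - t))^'+] --> L) /\
    (derive1 (f B t) x @[x --> (C * Num.sqrt (1 - t))^'-] --> L).
Proof.
have [V_derivable V_cvg] := Vstar_right_derivative B C ht1.
have [f_derivable f_cvg] := f_left_derivative ht1 (ltW (lt_trans hC hB)).
exists (- v B C * dpsi (- C)); do ![split=> //].
by rewrite smooth_fit ?ltW.
Qed.
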